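(* Let $G$ be a ribbon graph and $e\in E(G)$. Then (1) $P_{\langle\delta\rangle}(G,x)=P_{\langle\delta\rangle}(G\setminus e,x)+P_{\langle\delta\rangle}(G/e,x)$; (2) $P_{\langle\tau\delta\tau\rangle}(G,x)=P_{\langle\tau\delta\tau\rangle}(G\setminus e,x)+P_{\langle\tau\delta\tau\rangle}(G^{\tau(e)}/e,x)$; (3) $P_{\langle\delta\tau\rangle}(G,x)=P_{\langle\delta\tau\rangle}(G\setminus e,x)+P_{\langle\delta\tau\rangle}(G/e,x)+P_{\langle\delta\tau\rangle}(G^{\tau(e)}/e,x)$; (4) $P_{\langle\delta,\tau\rangle}(G,x)=2\big[P_{\langle\delta,\tau\rangle}(G\setminus e,x)+P_{\langle\delta,\tau\rangle}(G/e,x)+P_{\langle\delta,\tau\rangle}(G^{\tau(e)}/e,x)\big]$.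
   Context: A ribbon graph $G=(V(G),E(G))$ is a (orientable or non-orientable) surface with boundary, represented as the union of a set $V(G)$ of vertex discs and a set $E(G)$ of edge discs (ribbons) such that vertices and edges intersect in disjoint line segments, each such segment lies on the boundary of exactly one vertex and exactly one edge, and every edge contains exactly two such segments. $v(G)$, $e(G)$ denote the numbers of vertices and edges. For $A\subseteq E(G)$, $G\setminus A$ is obtained by deleting the edges in $A$ while keeping all vertices. The partial dual $G^{\delta(A)}$ is obtained by gluing a disc along each boundary component of the spanning ribbon subgraph $(V(G),A)$ (these discs become the vertex discs), removing the interiors of the original vertex discs, and keeping the edge ribbons. The partial Petrial $G^{\tau(A)}$ adds a half-twist to each edge in $A$. Contraction: $G/e=G^{\delta(e)}\setminus e$. For a word $w=w_1\cdots w_n$ over $\{\delta,\tau\}$, $G^{w(A)}=(\cdots(G^{w_n(A)})^{w_{n-1}(A)}\cdots)^{w_1(A)}$ (rightmost letter applied first), $G^{1(A)}=G$, and $G^{\xi(A)\pi(B)}=(G^{\xi(A)})^{\pi(B)}$. Vertex polynomials (sums over ordered partitions of $E(G)$ into pairwise disjoint, possibly empty parts): $P_{\langle\delta\rangle}(G,x)=\sum_{A\subseteq E(G)}x^{v(G^{\delta(A)})}$; $P_{\langle\tau\delta\tau\rangle}(G,x)=\sum_{A\subseteq E(G)}x^{v(G^{\tau\delta\tau(A)})}$; $P_{\langle\delta\tau\rangle}(G,x)=\sum_{(A_1,A_2,A_3)}x^{v(G^{1(A_1)\tau\delta(A_2)\delta\tau(A_3)})}$; $P_{\langle\delta,\tau\rangle}(G,x)=\sum_{(A_1,\dots,A_6)}x^{v(G^{1(A_1)\delta(A_2)\tau(A_3)\tau\delta(A_4)\delta\tau(A_5)\tau\delta\tau(A_6)})}$.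 *)

From mathcomp Require Import all_boot all_algebra.
Set Implicit Arguments. Unset Strict Implicit. Unset Printing Implicit Defensive.
Import GRing.Theory.
Local Open Scope ring_scope.

(* Each edge ribbon is a rectangle with four corners, indexed by bool * bool.
   The three fixed-point-free involutions of the corners: *)
Inductive pairing := PA | PB | PC.

Definition act (p : pairing) (c : bool * bool) : bool * bool :=
  match p with
  | PA => (~~ c.1, c.2)
  | PB => (c.1, ~~ c.2)
  | PC => (~~ c.1, ~~ c.2)
  end.

Definition third (p q : pairing) : pairing :=
  match p, q with
  | PA, PB | PB, PA => PC
  | PA, PC | PC, PA => PB
  | PB, PC | PC, PB => PA
  | _, _ => p
  end.

Definition flag (E : finType) := (E * (bool * bool))%type.

(* A ribbon graph whose edges are labelled by a subset of the finite type E.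
   - rg_edges : the edge set E(G);
   - rg_iso   : number of vertices with no edge-segment attached at all;
   - rg_arc   : pairs corners joined by an arc of a vertex boundary
                (between consecutive attaching segments);
   - rg_seg e : pairs the two corners of each attaching segment of e;
   - rg_side e: pairs the corners joined by a free side of the ribbon e.
   Labels e not in rg_edges are "ghost" edges: their (former) attaching
   segments are merely parts of vertex boundaries (this is how deletion
   keeps all vertices and joins the boundary arcs). *)
Record ribgraph (E : finType) := RGraph {
  rg_edges : {set E};
  rg_iso : nat;
  rg_arc : flag E -> flag E;
  rg_seg : E -> pairing;
  rg_side : E -> pairing }.

Definition is_ribbon_graph (E : finType) (G : ribgraph E) : Prop :=
  involutive (rg_arc G) /\ (forall x, rg_arc G x <> x) /\
  (forall e, rg_seg G e <> rg_side G e).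

(* vertex boundaries = orbits of <arc, seg> on flags *)
Definition vrel (E : finType) (G : ribgraph E) : rel (flag E) :=
  fun x y => (y == rg_arc G x) || (y == (x.1, act (rg_seg G x.1) x.2)).

Definition nverts (E : finType) (G : ribgraph E) : nat :=
  rg_iso G + n_comp (vrel G) predT.

Definition pdual (E : finType) (A : {set E}) (G : ribgraph E) : ribgraph E :=
  RGraph (rg_edges G) (rg_iso G) (rg_arc G)
    (fun e => if e \in A then rg_side G e else rg_seg G e)
    (fun e => if e \in A then rg_seg G e else rg_side G e).

Definition ppetrial (E : finType) (A : {set E}) (G : ribgraph E) : ribgraph E :=
  RGraph (rg_edges G) (rg_iso G) (rg_arc G) (rg_seg G)
    (fun e => if e \in A then third (rg_seg G e) (rg_side G e) else rg_side G e).

Definition rdelete (E : finType) (e : E) (G : ribgraph E) : ribgraph E :=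
  RGraph (rg_edges G :\ e) (rg_iso G) (rg_arc G) (rg_seg G) (rg_side G).

Definition rcontract (E : finType) (e : E) (G : ribgraph E) : ribgraph E :=
  rdelete e (pdual [set e] G).

Inductive rop := Dl | Tau.
Definition word := seq rop.

Definition apply_op (E : finType) (o : rop) (A : {set E}) (G : ribgraph E) :=
  match o with Dl => pdual A G | Tau => ppetrial A G end.

(* G^{w(A)} for w = w_1 ... w_n : rightmost letter applied first *)
Definition apply_word (E : finType) (w : word) (A : {set E}) (G : ribgraph E) :=
  foldr (fun o H => apply_op o A H) G w.

(* G^{xi_1(A_1) xi_2(A_2) ...} = (...(G^{xi_1(A_1)})^{xi_2(A_2)}...) *)
Definition apply_seq (E : finType) (G : ribgraph E) (s : seq (word * {set E})) :=
  foldl (fun H p => apply_word p.1 p.2 H) G s.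

(* sum over ordered partitions (A_1,...,A_n) of E(G) (parts possibly empty),
   encoded by the map sending each edge to the index of its part *)
Definition part_poly (E : finType) (ws : seq word) (G : ribgraph E) : {poly int} :=
  \sum_(f : {ffun E -> 'I_(size ws)} |
          [forall e, (e \notin rg_edges G) ==> (val (f e) == 0%N)])
    'X^(nverts (apply_seq G
           [seq (nth [::] ws i, [set e in rg_edges G | val (f e) == i]) | i <- iota 0 (size ws)])).

Definition P_d (E : finType) (G : ribgraph E) : {poly int} :=
  \sum_(A : {set E} | A \subset rg_edges G) 'X^(nverts (pdual A G)).

Definition P_tdt (E : finType) (G : ribgraph E) : {poly int} :=
  \sum_(A : {set E} | A \subset rg_edges G)
     'X^(nverts (apply_word [:: Tau; Dl; Tau] A G)).

Definition P_dt (E : finType) (G : ribgraph E) : {poly int} :=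
  part_poly [:: [::]; [:: Tau; Dl]; [:: Dl; Tau]] G.

Definition P_d_t (E : finType) (G : ribgraph E) : {poly int} :=
  part_poly [:: [::]; [:: Dl]; [:: Tau]; [:: Tau; Dl]; [:: Dl; Tau];
                [:: Tau; Dl; Tau]] G.

(* The number of vertices only sees the arc involution and the segment
   pairings of the edges, and a twisted dual G^{w(A)} acts edge by edge: it
   replaces the pair (segment pairing, side pairing) of each edge of A by its
   image under w.  Splitting a vertex polynomial according to the part that
   contains e, each summand becomes a summand of the same polynomial for
   G \ e, G / e or G^{tau(e)} / e, according as w maps the segment pairing of
   e to its old segment pairing, to its side pairing, or to the third pairing.
   For <delta, tau> each of the three cases occurs for exactly two words. *)

From mathcomp Require Import all_boot all_algebra.
From mathcomp Require Import ring zify.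
Set Implicit Arguments. Unset Strict Implicit. Unset Printing Implicit Defensive.
Import GRing.Theory.
Local Open Scope ring_scope.

Section RibbonDeletionContraction.
Variable E : finType.
Implicit Types (G H : ribgraph E) (A D : {set E}) (e x : E) (w : word) (ws : seq word).

Definition frame G x : pairing * pairing := (rg_seg G x, rg_side G x).

Definition op_frame (o : rop) (p : pairing * pairing) :=
  match o with Dl => (p.2, p.1) | Tau => (p.1, third p.1 p.2) end.

Definition word_frame w p := foldr op_frame p w.

Lemma nverts_eq G H : rg_iso G = rg_iso H -> rg_arc G =1 rg_arc H ->
  rg_seg G =1 rg_seg H -> nverts G = nverts H.
Proof.
move=> eq_iso eq_arc eq_seg.
have eq_conn : connect (vrel G) =2 connect (vrel H).
  by apply: eq_connect => y z; rewrite /vrel eq_arc eq_seg.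
by rewrite /nverts eq_iso (eq_n_comp eq_conn).
Qed.

Lemma apply_word_iso w A G : rg_iso (apply_word w A G) = rg_iso G.
Proof. by elim: w => [|[] w IHw]. Qed.

Lemma apply_word_arc w A G : rg_arc (apply_word w A G) = rg_arc G.
Proof. by elim: w => [|[] w IHw]. Qed.

Lemma frame_apply_word w A G x :
  frame (apply_word w A G) x = if x \in A then word_frame w (frame G x) else frame G x.
Proof.
elim: w => [|o w IHw] /=; first by case: ifP.
by case: o; rewrite /frame /= -[rg_seg _ x]/((frame _ x).1)
  -[rg_side _ x]/((frame _ x).2) IHw; case: (x \in A).
Qed.

Lemma seg_apply_word w A G x : rg_seg (apply_word w A G) x =
  if x \in A then (word_frame w (frame G x)).1 else rg_seg G x.
Proof. by rewrite -[LHS]/((frame _ x).1) frame_apply_word; case: ifP. Qed.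

Lemma apply_seq_iso s G : rg_iso (apply_seq G s) = rg_iso G.
Proof. by elim: s G => [|q s IHs] G //=; rewrite IHs apply_word_iso. Qed.

Lemma apply_seq_arc s G : rg_arc (apply_seq G s) = rg_arc G.
Proof. by elim: s G => [|q s IHs] G //=; rewrite IHs apply_word_arc. Qed.

Lemma frame_apply_seq s G x : frame (apply_seq G s) x =
  foldl (fun p (q : word * {set E}) => if x \in q.2 then word_frame q.1 p else p)
        (frame G x) s.
Proof. by elim: s G => [|q s IHs] G //=; rewrite IHs frame_apply_word. Qed.

Definition part_graph (ws : seq word) G (f : {ffun E -> 'I_(size ws)}) :=
  apply_seq G [seq (nth [::] ws i, [set y in rg_edges G | val (f y) == i])
              | i <- iota 0 (size ws)].

Lemma frame_part_graph ws G (f : {ffun E -> 'I_(size ws)}) x :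
  frame (part_graph G f) x =
  if x \in rg_edges G then word_frame (nth [::] ws (f x)) (frame G x) else frame G x.
Proof.
rewrite frame_apply_seq.
suff -> : forall m k p, foldl (fun p (q : word * {set E}) =>
                                 if x \in q.2 then word_frame q.1 p else p) p
    [seq (nth [::] ws i, [set y in rg_edges G | val (f y) == i]) | i <- iota m k]
  = if (x \in rg_edges G) && (m <= f x < m + k)%N
    then word_frame (nth [::] ws (f x)) p else p.
  by rewrite add0n leq0n ltn_ord !andbT.
move=> m k; elim: k m => [|k IHk] m p /=.
  by rewrite addn0 ltnNge andbN andbF.
rewrite IHk inE; case: (x \in rg_edges G) => //=.
have [<-|ne_fx] := eqVneq (nat_of_ord (f x)) m.
  by rewrite ltnn leqnn addnS ltnS leq_addr.
by congr (if _ then _ else _); lia.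
Qed.

Lemma seg_part_graph ws G (f : {ffun E -> 'I_(size ws)}) x :
  rg_seg (part_graph G f) x =
  if x \in rg_edges G then (word_frame (nth [::] ws (f x)) (frame G x)).1 else rg_seg G x.
Proof. by rewrite -[LHS]/((frame _ x).1) frame_part_graph; case: ifP. Qed.

Definition removes_edge e (s : pairing) G H : Prop :=
  [/\ rg_edges H = rg_edges G :\ e, rg_iso H = rg_iso G, rg_arc H = rg_arc G,
      forall x, x != e -> frame H x = frame G x & rg_seg H e = s].

Lemma removes_edge_delete G e : removes_edge e (rg_seg G e) G (rdelete e G).
Proof. by []. Qed.

Lemma removes_edge_contract G e : removes_edge e (rg_side G e) G (rcontract e G).
Proof.
by split=> //= [x ne_xe|]; rewrite /frame /= inE ?eqxx ?(negbTE ne_xe).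
Qed.

Lemma removes_edge_contract_petrial G e :
  removes_edge e (third (rg_seg G e) (rg_side G e)) G (rcontract e (ppetrial [set e] G)).
Proof.
by split=> //= [x ne_xe|]; rewrite /frame /= !inE ?eqxx ?(negbTE ne_xe).
Qed.

Definition word_poly w G : {poly int} :=
  \sum_(A : {set E} | A \subset rg_edges G) 'X^(nverts (apply_word w A G)).

Lemma big_subset_setD1 (R : nmodType) D e (F : {set E} -> R) : e \in D ->
  \sum_(A : {set E} | A \subset D) F A =
  \sum_(A : {set E} | A \subset D :\ e) F A
  + \sum_(A : {set E} | A \subset D :\ e) F (e |: A).
Proof.
move=> eD; rewrite (bigID (fun A => e \in A)) /= addrC; congr (_ + _).
  by apply: eq_bigl => A; rewrite subsetD1.
rewrite (reindex_onto (fun A => e |: A) (fun A => A :\ e)) => [|A /andP[_]];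
  last exact: setD1K.
apply: eq_bigl => A; rewrite subsetD1 subUset sub1set eD setU11 andbT /=.
have [eA|eNA] := boolP (e \in A); last by rewrite setU1K ?eqxx ?andbT.
rewrite /= andbF; apply/negbTE/nandP; right.
by apply: contraTneq eA => <-; rewrite setD11.
Qed.

Lemma word_poly_split w G e H : e \in rg_edges G ->
  removes_edge e (word_frame w (frame G e)).1 G H ->
  word_poly w G = word_poly w (rdelete e G) + word_poly w H.
Proof.
move=> eG [edgesH isoH arcH frameH segH].
rewrite /word_poly edgesH [LHS](big_subset_setD1 _ eG).
apply: f_equal2; apply: eq_bigr.
  move=> A _; apply: congr1; apply: nverts_eq; rewrite ?apply_word_iso ?apply_word_arc //.
  by move=> x; rewrite !seg_apply_word.
move=> A; rewrite subsetD1 => /andP[_ eNA].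
apply: congr1; apply: nverts_eq; rewrite ?apply_word_iso ?apply_word_arc ?isoH ?arcH //.
move=> x; rewrite !seg_apply_word !inE.
have [->|ne_xe] /= := eqVneq x e; first by rewrite (negbTE eNA) segH.
by rewrite (frameH _ ne_xe) -[rg_seg H x]/((frame H x).1) frameH; case: (x \in A).
Qed.

Definition supported n D (f : {ffun E -> 'I_n}) :=
  [forall x, (x \notin D) ==> (val (f x) == 0%N)].

Definition ffun_upd n e (k : 'I_n) (f : {ffun E -> 'I_n}) : {ffun E -> 'I_n} :=
  [ffun x => if x == e then k else f x].

Lemma ffun_upd_upd n e (k l : 'I_n) f : ffun_upd e k (ffun_upd e l f) = ffun_upd e k f.
Proof. by apply/ffunP => x; rewrite !ffunE; case: eqP. Qed.

Lemma ffun_upd_eq n e (k : 'I_n) f : (ffun_upd e k f == f) = (f e == k).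
Proof.
apply/eqP/eqP => [<-|fe]; first by rewrite ffunE eqxx.
by apply/ffunP => x; rewrite ffunE; case: eqP => // ->.
Qed.

Lemma supported_upd n D e (k : 'I_n) f : e \in D ->
  supported D (ffun_upd e k f) = supported D f.
Proof.
move=> eD; apply: eq_forallb => x; rewrite ffunE.
by have [->|//] := eqVneq x e; rewrite eD.
Qed.

Lemma supported_setD1 n D e (f : {ffun E -> 'I_n}) :
  supported (D :\ e) f = supported D f && (val (f e) == 0%N).
Proof.
apply/forallP/andP => [supf|[/forallP supf fe0] x].
  split; last by have := supf e; rewrite !inE eqxx.
  apply/forallP => x; apply/implyP => xD; apply: (implyP (supf x)).
  by rewrite !inE negb_and xD orbT.
by rewrite !inE negb_and negbK; apply/implyP => /orP[/eqP->|/(implyP (supf x))].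
Qed.

Lemma big_supported_fiber (R : nmodType) n D e (k : 'I_n) (F : {ffun E -> 'I_n} -> R) :
  e \in D ->
  \sum_(f | supported D f && (val (f e) == val k)) F f =
  \sum_(f | supported (D :\ e) f) F (ffun_upd e k f).
Proof.
move=> eD; pose z : 'I_n := Ordinal (leq_ltn_trans (leq0n k) (ltn_ord k)).
rewrite (reindex_onto (ffun_upd e k) (ffun_upd e z)) => [|f /andP[_ fe]]; last first.
  by rewrite ffun_upd_upd; apply/eqP; rewrite ffun_upd_eq -val_eqE.
apply: eq_bigl => f.
rewrite supported_upd // ffunE !eqxx andbT ffun_upd_upd ffun_upd_eq.
by rewrite supported_setD1 -val_eqE.
Qed.

Definition part_fiber ws G e k : {poly int} :=
  \sum_(f : {ffun E -> 'I_(size ws)} | supported (rg_edges G) f && (val (f e) == k))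
    'X^(nverts (part_graph G f)).

Lemma part_poly_fibers ws G e :
  part_poly ws G = \sum_(0 <= k < size ws) part_fiber ws G e k.
Proof.
rewrite big_mkord /part_poly.
by rewrite (partition_big (fun f : {ffun E -> 'I_(size ws)} => f e) xpredT).
Qed.

Lemma part_fiber_removes_edge ws G e k s H : e \in rg_edges G -> (k < size ws)%N ->
  removes_edge e s G H -> (word_frame (nth [::] ws k) (frame G e)).1 = s ->
  part_fiber ws G e k = part_poly ws H.
Proof.
move=> eG lt_k_ws [edgesH isoH arcH frameH <-] segH.
pose k' : 'I_(size ws) := Ordinal lt_k_ws.
apply: eq_trans (big_supported_fiber k' _ eG) _.
rewrite -edgesH; apply: eq_bigr => f _.
apply: congr1; apply: nverts_eq; rewrite ?apply_seq_iso ?apply_seq_arc ?isoH ?arcH //.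
move=> x; rewrite !seg_part_graph edgesH !inE ffunE.
have [->|ne_xe] /= := eqVneq x e; first by rewrite eG segH.
by rewrite (frameH _ ne_xe) -[rg_seg H x]/((frame H x).1) frameH.
Qed.

End RibbonDeletionContraction.

Theorem mainTheorem4 (E : finType) (G : ribgraph E) (e : E) :
  is_ribbon_graph G -> e \in rg_edges G ->
  [/\ P_d G = P_d (rdelete e G) + P_d (rcontract e G),
      P_tdt G = P_tdt (rdelete e G) + P_tdt (rcontract e (ppetrial [set e] G)),
      P_dt G = P_dt (rdelete e G) + P_dt (rcontract e G)
               + P_dt (rcontract e (ppetrial [set e] G))
    & P_d_t G = 2%:R * (P_d_t (rdelete e G) + P_d_t (rcontract e G)
                        + P_d_t (rcontract e (ppetrial [set e] G)))].
Proof.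
move=> _ eG.
have del := removes_edge_delete G e.
have con := removes_edge_contract G e.
have conp := removes_edge_contract_petrial G e.
split.
- exact: (word_poly_split (w := [:: Dl]) eG con).
- exact: (word_poly_split (w := [:: Tau; Dl; Tau]) eG conp).
- pose ws := [:: [::]; [:: Tau; Dl]; [:: Dl; Tau]].
  rewrite /P_dt -/ws (part_poly_fibers _ _ e) /index_iota /= 2!big_cons [in LHS]big_seq1.
  rewrite (part_fiber_removes_edge (ws := ws) (k := 0) eG isT del erefl).
  rewrite (part_fiber_removes_edge (ws := ws) (k := 1) eG isT con erefl).
  rewrite (part_fiber_removes_edge (ws := ws) (k := 2) eG isT conp erefl).
  exact: addrA.
pose ws := [:: [::]; [:: Dl]; [:: Tau]; [:: Tau; Dl]; [:: Dl; Tau]; [:: Tau; Dl; Tau]].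
rewrite /P_d_t -/ws (part_poly_fibers _ _ e) /index_iota /= 5!big_cons [in LHS]big_seq1.
rewrite (part_fiber_removes_edge (ws := ws) (k := 0) eG isT del erefl).
rewrite (part_fiber_removes_edge (ws := ws) (k := 1) eG isT con erefl).
rewrite (part_fiber_removes_edge (ws := ws) (k := 2) eG isT del erefl).
rewrite (part_fiber_removes_edge (ws := ws) (k := 3) eG isT con erefl).
rewrite (part_fiber_removes_edge (ws := ws) (k := 4) eG isT conp erefl).
rewrite (part_fiber_removes_edge (ws := ws) (k := 5) eG isT conp erefl).
(* Abstracted so that [ring] sees the three polynomials as atoms. *)
move: (part_poly ws (rdelete e G)) (part_poly ws (rcontract e G))
      (part_poly ws (rcontract e (ppetrial [set e] G))) => a b c.
ring.
Qed.
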